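(* Let $k\geq 4$ and let $G$ be a diregular $(2,k,+3)$-digraph. Let $u,v$ be distinct vertices with exactly one common out-neighbour $u_2$, and write $N^+(u)=\{u_1,u_2\}$, $N^+(v)=\{v_1,u_2\}$. Then $N^+(u_1)\neq N^+(v_1)$.
   Context: A digraph is $k$-geodetic if for every ordered pair of vertices $x,y$ there is at most one directed path from $x$ to $y$ of length at most $k$ (the trivial path counts). A diregular $(2,k,+3)$-digraph is a $k$-geodetic digraph of order $1+2+\dots+2^k+3$ in which every vertex has in- and out-degree $2$. $N^+(x)$ is the set of out-neighbours of $x$. *)

From mathcomp Require Import all_boot.
Set Implicit Arguments. Unset Strict Implicit. Unset Printing Implicit Defensive.

Definition outN (V : finType) (e : rel V) (x : V) : {set V} := [set y | e x y].
Definition inN (V : finType) (e : rel V) (x : V) : {set V} := [set y | e y x].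

(* A directed path (walk) from x to y of length size p is a sequence p with
   path e x p and last x p = y; the trivial path is p = [::]. *)
Definition k_geodetic (V : finType) (e : rel V) (k : nat) : Prop :=
  forall (x y : V) (p q : seq V),
    path e x p -> last x p = y -> size p <= k ->
    path e x q -> last x q = y -> size q <= k -> p = q.

Definition diregular2 (V : finType) (e : rel V) : Prop :=
  forall x : V, #|outN e x| = 2 /\ #|inN e x| = 2.

Definition dig_2k3 (V : finType) (e : rel V) (k : nat) : Prop :=
  [/\ k_geodetic e k, diregular2 e & #|V| = \sum_(i < k.+1) 2 ^ i + 3].

From mathcomp Require Import all_boot.
From mathcomp Require Import zify.
Set Implicit Arguments. Unset Strict Implicit. Unset Printing Implicit Defensive.

(* Since G is k-geodetic with out-degree 2, the out-ball of radius k around u is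
   a Moore tree with 1 + 2 + ... + 2^k vertices, so exactly three vertices lie
   outside it.  If N+(u1) = N+(v1), two of them are v and v1; call the third r.
   The ball splits as {u} together with the balls of radius k-1 around u1 and u2,
   and no vertex has two out-neighbours in {u, v, u1, v1}, since all four reach a
   common out-neighbour of u1 and v1 within two steps.
   If r -> u1 or r -> v1, the other out-neighbour of r lies within distance k-1
   of u2; extending a geodesic from it to distance exactly k-1 from u2 gives a
   vertex whose out-neighbours must both lie in {u, v, u1, v1}.  Otherwise the
   second in-neighbours of u1 and of v1 sit at distance exactly k-1 from u2, and
   their second out-neighbour is forced to be r; then the same leaf argument,
   together with the uniqueness of short paths to a common out-neighbour of u1
   and v1, pushes both out-neighbours of r into {u, v, u1, v1}. *)


Lemma cards2_with (T : finType) (A : {set T}) a :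
  #|A| = 2 -> a \in A -> exists2 b, b != a & A = [set a; b].
Proof.
move/eqP/cards2P=> [x [y [neq_xy ->]]] /set2P[->|->].
  by exists y; rewrite // eq_sym.
by exists x; rewrite // setUC.
Qed.

Lemma cards3_with (T : finType) (A : {set T}) a b :
  #|A| = 3 -> a \in A -> b \in A -> a != b ->
  exists c, [/\ c != a, c != b & A = [set a; b; c]].
Proof.
move=> cardA Aa Ab neq_ab.
have cardAa : #|A :\ a| = 2 by move: (cardsD1 a A); rewrite cardA Aa => -[].
have Aab : b \in A :\ a by rewrite !inE eq_sym neq_ab.
have [c neq_cb Aa_bc] := cards2_with cardAa Aab.
have : c \in A :\ a by rewrite Aa_bc set22.
rewrite !inE => /andP[neq_ca _]; exists c; split=> //.
by rewrite -[LHS](setD1K Aa) Aa_bc setUA.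
Qed.

Lemma in_outN (V : finType) (e : rel V) x y : (y \in outN e x) = e x y.
Proof. by rewrite inE. Qed.

Lemma arc_set2 (V : finType) (e : rel V) x x1 x2 y :
  outN e x = [set x1; x2] -> e x y = (y == x1) || (y == x2).
Proof. by move=> outNx; rewrite -in_outN outNx !inE. Qed.

Section Balls.
Variables (V : finType) (e : rel V).

Fixpoint ball n x : {set V} :=
  if n is n'.+1 then x |: \bigcup_(y in outN e x) ball n' y else [set x].

Lemma ballS n x y :
  (y \in ball n.+1 x) = (y == x) || [exists z, e x z && (y \in ball n z)].
Proof.
rewrite /= in_setU1; congr (_ || _).
apply/bigcupP/existsP => [[z]|[z /andP[]]].
  by rewrite in_outN => ? ?; exists z; apply/andP.
by exists z; rewrite ?in_outN.
Qed.

Lemma ball_center n x : x \in ball n x.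
Proof. by case: n => [|n]; rewrite ?ballS ?inE eqxx. Qed.

Lemma ballP n x y :
  reflect (exists p, [/\ path e x p, last x p = y & size p <= n]) (y \in ball n x).
Proof.
apply: (iffP idP).
  elim: n x => [|n IH] x; first by rewrite inE => /eqP->; exists [::].
  rewrite ballS => /orP[/eqP->|/existsP[z /andP[xz /IH[p [zp py size_p]]]]].
    by exists [::].
  by exists (z :: p); rewrite /= xz.
move=> [p [xp <- size_p]].
elim: n x p xp size_p => [|n IH] x [|z p] xp size_p; rewrite ?ball_center //.
case/andP: xp => xz zp; rewrite ballS; apply/orP; right.
by apply/existsP; exists z; rewrite xz /= IH.
Qed.

Lemma ball_cons n x z y : e x z -> y \in ball n z -> y \in ball n.+1 x.
Proof.
by move=> xz /ballP[p [zp py size_p]]; apply/ballP; exists (z :: p); rewrite /= xz.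
Qed.

Lemma ball_rcons n x y z : y \in ball n x -> e y z -> z \in ball n.+1 x.
Proof.
move=> /ballP[p [xp py size_p]] yz; apply/ballP; exists (rcons p z).
by rewrite rcons_path xp py yz last_rcons size_rcons.
Qed.

Lemma ball_mono m n x : m <= n -> {subset ball m x <= ball n x}.
Proof.
move=> le_mn y /ballP[p [xp py size_p]]; apply/ballP; exists p.
by rewrite (leq_trans size_p).
Qed.

Lemma ball1 x y : (y \in ball 1 x) = (y == x) || e x y.
Proof.
rewrite ballS; congr (_ || _); apply/existsP/idP => [[z /andP[xz]]|xy].
  by rewrite inE => /eqP->.
by exists y; rewrite xy ball_center.
Qed.

Lemma ball_set2 n x x1 x2 :
  outN e x = [set x1; x2] -> ball n.+1 x = x |: (ball n x1 :|: ball n x2).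
Proof.
move=> outNx; apply/setP => y; rewrite ballS !inE; congr (_ || _).
apply/existsP/orP => [[z /andP[]]|[y1|y2]].
- by rewrite (arc_set2 _ outNx) => /orP[]/eqP->; [left|right].
- by exists x1; rewrite (arc_set2 _ outNx) eqxx.
- by exists x2; rewrite (arc_set2 _ outNx) eqxx orbT.
Qed.

Lemma ball_twin n x y t :
  outN e x = outN e y -> t \in ball n x -> t = x \/ t \in ball n y.
Proof.
case: n => [|n] outNxy; first by rewrite inE => /eqP; left.
rewrite ballS => /orP[/eqP|/existsP[z /andP[xz zt]]]; first by left.
by right; apply: ball_cons zt; rewrite -in_outN -outNxy in_outN.
Qed.

Section Geodetic.
Variable k : nat.
Hypothesis geo : k_geodetic e k.

Lemma geodetic_exact x p t :
  path e x p -> size p < k -> e (last x p) t -> t \notin ball (size p) x.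
Proof.
move=> xp lt_pk pt; apply/negP => /ballP[q [xq qt size_q]].
have xpt : path e x (rcons p t) by rewrite rcons_path xp pt.
have eq_pq : rcons p t = q.
  apply: (geo xpt (last_rcons x p t) _ xq qt); first by rewrite size_rcons.
  exact: leq_trans size_q (ltnW lt_pk).
by move: size_q; rewrite -eq_pq size_rcons ltnn.
Qed.

Lemma geodetic_frontier m x y t :
  m < k -> y \in ball m x -> y \notin ball m.-1 x -> e y t -> t \notin ball m x.
Proof.
move=> lt_mk /ballP[p [xp py size_p]] y_far yt.
have le_mp : m <= size p.
  by rewrite leqNgt; apply: contra y_far => lt_pm; apply/ballP; exists p; split=> //; lia.
have -> : m = size p by apply/eqP; rewrite eqn_leq size_p le_mp.
by apply: geodetic_exact; rewrite ?py // (leq_ltn_trans size_p).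
Qed.

Lemma geodetic_acyclic n x y : n < k -> y \in ball n x -> ~~ e y x.
Proof.
move=> lt_nk /ballP[p [xp py size_p]]; apply/negP => yx.
have xpx : path e x (rcons p x) by rewrite rcons_path xp py yx.
have size_px : size (rcons p x) <= k by rewrite size_rcons (leq_ltn_trans size_p).
have := geo xpx (last_rcons x p x) size_px (isT : path e x [::]) erefl (leq0n k).
by move/(congr1 size); rewrite size_rcons.
Qed.

Lemma geodetic_unique_pred n1 n2 x y1 y2 z :
  n1 < k -> n2 < k -> y1 \in ball n1 x -> y2 \in ball n2 x ->
  e y1 z -> e y2 z -> y1 = y2.
Proof.
move=> lt1 lt2 /ballP[p1 [xp1 py1 size_p1]] /ballP[p2 [xp2 py2 size_p2]] y1z y2z.
have xp1z : path e x (rcons p1 z) by rewrite rcons_path xp1 py1 y1z.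
have xp2z : path e x (rcons p2 z) by rewrite rcons_path xp2 py2 y2z.
have size_p1z : size (rcons p1 z) <= k by rewrite size_rcons (leq_ltn_trans size_p1).
have size_p2z : size (rcons p2 z) <= k by rewrite size_rcons (leq_ltn_trans size_p2).
have := geo xp1z (last_rcons x p1 z) size_p1z xp2z (last_rcons x p2 z) size_p2z.
by move/rcons_inj => [eq_p]; rewrite -py1 -py2 eq_p.
Qed.

Lemma geodetic_branches_disjoint n1 n2 x x1 x2 z :
  n1 < k -> n2 < k -> e x x1 -> e x x2 -> z \in ball n1 x1 -> z \in ball n2 x2 ->
  x1 = x2.
Proof.
move=> lt1 lt2 xx1 xx2 /ballP[p1 [xp1 pz1 size_p1]] /ballP[p2 [xp2 pz2 size_p2]].
have xp1' : path e x (x1 :: p1) by rewrite /= xx1.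
have xp2' : path e x (x2 :: p2) by rewrite /= xx2.
by case: (geo xp1' pz1 (leq_ltn_trans size_p1 lt1) xp2' pz2 (leq_ltn_trans size_p2 lt2)).
Qed.

Hypothesis out2 : forall x, #|outN e x| = 2.

Lemma path_of_size n x : exists2 p, path e x p & size p = n.
Proof.
elim: n x => [|n IH] x; first by exists [::].
have /card_gt0P[y] : 0 < #|outN e x| by rewrite out2.
rewrite in_outN => xy; have [p yp size_p] := IH y.
by exists (y :: p); rewrite /= ?xy ?size_p.
Qed.

Lemma card_ball n x : n <= k -> #|ball n x| = \sum_(i < n.+1) 2 ^ i.
Proof.
elim: n x => [|n IH] x lt_nk; first by rewrite cards1 big_ord1.
have /eqP/cards2P[x1 [x2 [neq12 outNx]]] := out2 x.
have xx1 : e x x1 by rewrite -in_outN outNx set21.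
have xx2 : e x x2 by rewrite -in_outN outNx set22.
have disjoint12 : ball n x1 :&: ball n x2 = set0.
  apply/setP => z; rewrite !inE; apply/negP => /andP[z1 z2].
  by move/eqP: neq12; apply; apply: geodetic_branches_disjoint xx1 xx2 z1 z2.
have x_notin : x \notin ball n x1 :|: ball n x2.
  rewrite in_setU negb_or; apply/andP.
  by split; apply/negP => /(geodetic_acyclic lt_nk); rewrite ?xx1 ?xx2.
rewrite (ball_set2 _ outNx) cardsU1 x_notin cardsU disjoint12 cards0 subn0.
rewrite !IH ?(ltnW lt_nk) //.
rewrite [RHS]big_ord_recl addnn -mul2n big_distrr /=.
by congr (_ + _); apply: eq_bigr => i _; rewrite expnS.
Qed.

Lemma geodetic_leaf m s x y :
  m < k -> y \in ball m x -> y \notin ball s x ->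
  exists2 l, l \in ball (m - s.+1) y & forall t, e l t -> t \notin ball m x.
Proof.
move=> lt_mk /ballP[p [xp py size_p]] y_far.
have lt_sp : s < size p.
  by rewrite ltnNge; apply: contra y_far => le_ps; apply/ballP; exists p.
have [q yq size_q] := path_of_size (m - size p) y.
exists (last y q).
  apply: (ball_mono (_ : m - size p <= m - s.+1)); first lia.
  by apply/ballP; exists q; rewrite size_q.
move=> t q_t; have := @geodetic_exact x (p ++ q) t.
rewrite cat_path xp py yq last_cat size_cat size_q subnKC //.
by apply; rewrite // py.
Qed.

End Geodetic.
End Balls.

Section TwinOutNeighbourhoods.
Variables (k : nat) (V : finType) (e : rel V) (u v u1 u2 v1 : V).
Hypotheses (k_ge3 : 3 <= k) (geo : k_geodetic e k) (deg : diregular2 e)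
  (order : #|V| = \sum_(i < k.+1) 2 ^ i + 3) (neq_uv : u != v)
  (common : outN e u :&: outN e v = [set u2])
  (outNu : outN e u = [set u1; u2]) (outNv : outN e v = [set v1; u2])
  (twins : outN e u1 = outN e v1).

Let out2 x : #|outN e x| = 2 := proj1 (deg x).
Let in2 x : #|inN e x| = 2 := proj2 (deg x).
Let lt0k : 0 < k. Proof. lia. Qed.
Let lt2k : 2 < k. Proof. lia. Qed.
Let ltpk : k.-1 < k. Proof. lia. Qed.
Let pred2K : k.-2.+1 = k.-1. Proof. lia. Qed.

Local Notation quad := ([set u; v] :|: [set u1; v1]).

Lemma arc_u_u1 : e u u1. Proof. by rewrite -in_outN outNu set21. Qed.
Lemma arc_u_u2 : e u u2. Proof. by rewrite -in_outN outNu set22. Qed.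
Lemma arc_v_v1 : e v v1. Proof. by rewrite -in_outN outNv set21. Qed.
Lemma arc_v_u2 : e v u2. Proof. by rewrite -in_outN outNv set22. Qed.

Lemma no_loop x : ~~ e x x.
Proof. exact: (geodetic_acyclic geo lt0k (ball_center e 0 x)). Qed.

Lemma neq_arc x y : e x y -> x != y.
Proof. by move=> xy; apply: contraTneq xy => <-; apply: no_loop. Qed.

Lemma neq_u1u2 : u1 != u2.
Proof. by have := out2 u; rewrite outNu cards2; case: (u1 != u2). Qed.

Lemma neq_v1u2 : v1 != u2.
Proof. by have := out2 v; rewrite outNv cards2; case: (v1 != u2). Qed.

Lemma common_succ y : e u y -> e v y -> y = u2.
Proof. by move=> uy vy; apply/set1P; rewrite -common inE !in_outN uy vy. Qed.

Lemma common_pred_uv x x' y : x \in [set u; v] -> x' \in [set u; v] -> x != x' ->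
  e x y -> e x' y -> y = u2.
Proof.
move=> /set2P[]-> /set2P[]->; rewrite ?eqxx // => _ xy x'y.
  exact: common_succ xy x'y.
exact: common_succ x'y xy.
Qed.

Lemma neq_u1v1 : u1 != v1.
Proof.
apply: contraNneq neq_u1u2 => eq_u1v1; apply/eqP.
by apply: (common_succ arc_u_u1); rewrite eq_u1v1 arc_v_v1.
Qed.

Lemma inN_u2 x : e x u2 -> x \in [set u; v].
Proof.
suff -> : [set u; v] = inN e u2 by rewrite inE.
apply/eqP; rewrite eqEcard cards2 neq_uv in2 andbT.
by apply/subsetP => y /set2P[]->; rewrite inE ?arc_u_u2 ?arc_v_u2.
Qed.

Lemma twin_arc x y : x \in [set u1; v1] -> e x y = e u1 y.
Proof. by case/set2P=> ->; rewrite -!in_outN ?twins. Qed.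

Lemma no_arc_between_twins x y :
  x \in [set u1; v1] -> y \in [set u1; v1] -> ~~ e x y.
Proof.
by move=> x_twin y_twin; rewrite (twin_arc y x_twin) -(twin_arc y y_twin) no_loop.
Qed.

Lemma twin_succ : exists2 a, e u1 a & e v1 a.
Proof.
have /card_gt0P[a] : 0 < #|outN e u1| by rewrite out2.
by rewrite in_outN => u1a; exists a; rewrite // (twin_arc a (set22 u1 v1)).
Qed.

Lemma succ_in_quad_unique x t1 t2 :
  e x t1 -> e x t2 -> t1 \in quad -> t2 \in quad -> t1 = t2.
Proof.
have [a u1a v1a] := twin_succ.
have near_a t : t \in quad -> a \in ball e 2 t.
  case/setUP => /set2P[]->.
  - exact: ball_cons arc_u_u1 (ball_cons u1a (ball_center e 0 a)).
  - exact: ball_cons arc_v_v1 (ball_cons v1a (ball_center e 0 a)).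
  - exact: ball_cons u1a (ball_center e 1 a).
  - exact: ball_cons v1a (ball_center e 1 a).
move=> xt1 xt2 /near_a a1 /near_a a2.
exact: (geodetic_branches_disjoint geo lt2k lt2k xt1 xt2 a1 a2).
Qed.

Lemma outN_not_subset_quad x : ~~ (outN e x \subset quad).
Proof.
have /eqP/cards2P[x1 [x2 [neq12 outNx]]] := out2 x.
have xx1 : e x x1 by rewrite -in_outN outNx set21.
have xx2 : e x x2 by rewrite -in_outN outNx set22.
rewrite outNx subUset !sub1set; apply: contra neq12 => /andP[x1q x2q].
by apply/eqP; apply: (succ_in_quad_unique xx1 xx2 x1q x2q).
Qed.

Lemma mem_quad_twin y : y \in [set u1; v1] -> y \in quad.
Proof. by move=> y_twin; rewrite in_setU y_twin orbT. Qed.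

Lemma ball_u1_sub x1 t :
  x1 \in [set u1; v1] -> t \in ball e k.-1 u1 -> (t \in quad) || (t \in ball e k.-1 x1).
Proof.
case/set2P=> -> t_u1; first by rewrite t_u1 orbT.
case: (ball_twin twins t_u1) => [->|->]; last by rewrite orbT.
by rewrite (mem_quad_twin (set21 u1 v1)).
Qed.

Lemma other_succ x y0 :
  e x y0 -> y0 \in quad -> exists y, [/\ e x y, y != y0 & y \notin quad].
Proof.
move=> x_y0 y0_quad.
have [y neq_yy0 outNx] : exists2 y, y != y0 & outN e x = [set y0; y].
  by apply: cards2_with (out2 x) _; rewrite in_outN.
have x_y : e x y by rewrite -in_outN outNx set22.
exists y; split=> //; apply: contra neq_yy0 => y_quad; apply/eqP.
exact: (succ_in_quad_unique x_y x_y0 y_quad y0_quad).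
Qed.

Lemma ball_u_split : ball e k u = u |: (ball e k.-1 u1 :|: ball e k.-1 u2).
Proof. by rewrite -(ball_set2 _ outNu) (prednK lt0k). Qed.

Lemma v_notin_ball : v \notin ball e k u.
Proof.
rewrite ball_u_split !inE eq_sym (negbTE neq_uv) /=; apply/norP; split.
  apply/negP => /(ball_twin twins)[eq_vu1|].
    have v_u : v \in ball e 1 u by rewrite eq_vu1 (ball_cons arc_u_u1 (ball_center e 0 u1)).
    have := geodetic_unique_pred geo lt0k (ltnW lt2k) (ball_center e 0 u) v_u arc_u_u2 arc_v_u2.
    by apply/eqP.
  by move/(geodetic_acyclic geo ltpk); rewrite arc_v_v1.
by apply/negP => /(geodetic_acyclic geo ltpk); rewrite arc_v_u2.
Qed.

Lemma v1_notin_ball : v1 \notin ball e k u.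
Proof.
have [a u1a v1a] := twin_succ.
rewrite ball_u_split !inE !negb_or; apply/and3P; split.
- apply: contraNneq neq_uv => eq_v1u; apply/eqP.
  have u_v : u \in ball e 1 v by rewrite -eq_v1u (ball_cons arc_v_v1 (ball_center e 0 v1)).
  exact: (geodetic_unique_pred geo (ltnW lt2k) lt0k u_v (ball_center e 0 v) arc_u_u2 arc_v_u2).
- apply: contra neq_u1v1 => v1_u1; apply/eqP/esym.
  exact: (geodetic_unique_pred geo ltpk lt0k v1_u1 (ball_center e 0 u1) v1a u1a).
- apply: contra neq_v1u2 => v1_u2; apply/eqP/esym.
  have v1_v1 := ball_center e 0 v1.
  exact: (geodetic_branches_disjoint geo ltpk lt0k arc_v_u2 arc_v_v1 v1_u2 v1_v1).
Qed.

Lemma compl_ball_u : exists r, [/\ r != v, r != v1 & ~: ball e k u = [set v; v1; r]].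
Proof.
have card_out : #|~: ball e k u| = 3.
  move/eqP: (cardsC (ball e k u)).
  by rewrite (card_ball geo out2 _ (leqnn k)) order eqn_add2l => /eqP.
have v_out : v \in ~: ball e k u by rewrite inE v_notin_ball.
have v1_out : v1 \in ~: ball e k u by rewrite inE v1_notin_ball.
have [r [neq_rv neq_rv1 ->]] := cards3_with card_out v_out v1_out (neq_arc arc_v_v1).
by exists r.
Qed.

Section Outlier.
Variable r : V.
Hypotheses (neq_rv : r != v) (neq_rv1 : r != v1)
  (outliers : ~: ball e k u = [set v; v1; r]).

Lemma vertex_cover t :
  [|| t \in ball e k.-1 u1, t \in ball e k.-1 u2, t \in quad | t == r].
Proof.
case: (boolP (t \in ball e k u)) => [|t_out].
  rewrite ball_u_split in_setU1 in_setU => /or3P[/eqP->|->|->]; rewrite ?orbT //.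
  by rewrite !inE eqxx /= !orbT.
have : t \in ~: ball e k u by rewrite in_setC.
by rewrite outliers !inE => /orP[/orP[]|]/eqP->; rewrite !eqxx /= ?orbT.
Qed.

Lemma r_notin_ball : r \notin ball e k u.
Proof. by rewrite -in_setC outliers !inE eqxx orbT. Qed.

Lemma neq_ru : r != u.
Proof. by apply: contraNneq r_notin_ball => ->; rewrite ball_center. Qed.

Lemma neq_ru1 : r != u1.
Proof.
apply: contraNneq r_notin_ball => ->.
by rewrite ball_u_split in_setU1 in_setU ball_center /= orbT.
Qed.

Lemma no_arc_r_u2 : ~~ e r u2.
Proof. by apply/negP => /inN_u2; rewrite !inE (negbTE neq_ru) (negbTE neq_rv). Qed.

Lemma no_arc_r_twin x1 : x1 \in [set u1; v1] -> ~~ e r x1.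
Proof.
move=> x1_twin; apply/negP => r_x1.
have [y [r_y neq_yx1 y_quad]] := other_succ r_x1 (mem_quad_twin x1_twin).
have from_y n t : n < k -> t \in ball e n y -> t \notin ball e k.-1 x1.
  move=> lt_nk t_y; apply: contra neq_yx1 => t_x1; apply/eqP.
  exact: (geodetic_branches_disjoint geo lt_nk ltpk r_y r_x1 t_y t_x1).
have y_u1 : y \notin ball e k.-1 u1.
  apply/negP => /(ball_u1_sub x1_twin); rewrite (negbTE y_quad) /=.
  by apply/negP; apply: (from_y 0); rewrite ?ball_center.
have y_u2 : y \in ball e k.-1 u2.
  have := vertex_cover y.
  by rewrite (negbTE y_u1) (negbTE y_quad) eq_sym (negbTE (neq_arc r_y)) /= orbF.
have y_far : y \notin ball e 0 u2 by rewrite /= inE; apply: contraNneq no_arc_r_u2 => <-.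
have [l l_y l_leaf] := geodetic_leaf geo out2 ltpk y_u2 y_far.
rewrite subn1 in l_y.
have l_r : l \in ball e k.-1 r by rewrite -pred2K (ball_cons r_y l_y).
move/negP: (outN_not_subset_quad l); apply; apply/subsetP => t; rewrite in_outN => l_t.
have t_y : t \in ball e k.-1 y by rewrite -pred2K (ball_rcons l_y l_t).
have := vertex_cover t; rewrite (negbTE (l_leaf t l_t)) /=.
case/or3P => [/(ball_u1_sub x1_twin)/orP[//|t_x1]|//|/eqP eq_tr].
- by rewrite (negbTE (from_y _ _ ltpk t_y)) in t_x1.
- by move: l_t; rewrite eq_tr (negbTE (geodetic_acyclic geo ltpk l_r)).
Qed.

Lemma frontier_to_r x y0 : y0 \in [set u1; v1] -> e x y0 ->
  x \in ball e k.-1 u2 -> x \notin ball e k.-2 u2 -> e x r.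
Proof.
move=> y0_twin x_y0 x_in x_far.
have [x2 [x_x2 neq_x2y0 x2_quad]] := other_succ x_y0 (mem_quad_twin y0_twin).
have x2_u2 : x2 \notin ball e k.-1 u2 := geodetic_frontier geo ltpk x_in x_far x_x2.
have x2_u1 : x2 \notin ball e k.-1 u1.
  apply/negP => /(ball_u1_sub y0_twin); rewrite (negbTE x2_quad) /= => x2_y0.
  move/eqP: neq_x2y0; apply.
  exact: (geodetic_branches_disjoint geo lt0k ltpk x_x2 x_y0 (ball_center e 0 x2) x2_y0).
have := vertex_cover x2; rewrite (negbTE x2_u1) (negbTE x2_u2) (negbTE x2_quad) /=.
by move/eqP <-.
Qed.

Lemma twin_pred_frontier x0 y0 : e x0 u2 -> e x0 y0 -> y0 \in [set u1; v1] ->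
  exists w, [/\ e w y0, e w r, w \in ball e k.-1 u2 & w \notin ball e k.-2 u2].
Proof.
move=> x0_u2 x0_y0 y0_twin.
have [w neq_wx0 inNy0] : exists2 w, w != x0 & inN e y0 = [set x0; w].
  by apply: cards2_with (in2 y0) _; rewrite inE.
have w_y0 : e w y0 by have := set22 x0 w; rewrite -inNy0 inE.
have neq_y0u2 : y0 != u2 by case/set2P: y0_twin => ->; [exact: neq_u1u2 | exact: neq_v1u2].
have w_far : w \notin ball e k.-2 u2.
  apply: contra neq_y0u2 => w_in; apply/eqP/esym.
  have y0_in : y0 \in ball e k.-1 u2 by rewrite -pred2K (ball_rcons w_in w_y0).
  exact: (geodetic_branches_disjoint geo ltpk lt0k x0_u2 x0_y0 y0_in (ball_center e 0 y0)).
have w_quad : w \notin quad.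
  rewrite in_setU negb_or; apply/andP; split.
    apply: contra neq_y0u2 => w_uv; apply/eqP.
    exact: (common_pred_uv w_uv (inN_u2 x0_u2) neq_wx0 w_y0 x0_y0).
  by apply: contraTN w_y0 => w_twin; apply: no_arc_between_twins.
have w_u1 : w \notin ball e k.-1 u1.
  apply/negP => /(ball_u1_sub y0_twin); rewrite (negbTE w_quad) /= => w_y0'.
  by move: w_y0; rewrite (negbTE (geodetic_acyclic geo ltpk w_y0')).
have w_in : w \in ball e k.-1 u2.
  have := vertex_cover w; rewrite (negbTE w_u1) (negbTE w_quad) /=.
  by case/orP => // /eqP eq_wr; move: w_y0; rewrite eq_wr (negbTE (no_arc_r_twin y0_twin)).
by exists w; split=> //; apply: frontier_to_r y0_twin w_y0 w_in w_far.
Qed.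

Lemma r_succ_not_u2_succ y : e r y -> ~~ e u2 y.
Proof.
move=> r_y; apply/negP => u2_y.
have [w [w_u1 w_r w_in w_far]] := twin_pred_frontier arc_u_u2 arc_u_u1 (set21 u1 v1).
have [w' [w'_v1 w'_r w'_in w'_far]] := twin_pred_frontier arc_v_u2 arc_v_v1 (set22 u1 v1).
have [y' neq_y'y outNu2] : exists2 y', y' != y & outN e u2 = [set y; y'].
  by apply: cards2_with (out2 u2) _; rewrite in_outN.
have ball_u2 : ball e k.-1 u2 = u2 |: (ball e k.-2 y :|: ball e k.-2 y').
  by rewrite -(ball_set2 _ outNu2) pred2K.
have to_y' x :
    e x r -> x \in ball e k.-1 u2 -> x \notin ball e k.-2 u2 -> x \in ball e k.-2 y'.
  move=> x_r; rewrite ball_u2 in_setU1 in_setU => /or3P[/eqP->|x_y|//].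
    by rewrite ball_center.
  have x_r' : x \in ball e k.-1 r by rewrite -pred2K (ball_cons r_y x_y).
  by move: x_r; rewrite (negbTE (geodetic_acyclic geo ltpk x_r')).
have [a u1a v1a] := twin_succ.
have u1_y' : u1 \in ball e k.-1 y'.
  by rewrite -pred2K (ball_rcons (to_y' w w_r w_in w_far) w_u1).
have v1_y' : v1 \in ball e k.-1 y'.
  by rewrite -pred2K (ball_rcons (to_y' w' w'_r w'_in w'_far) w'_v1).
move/eqP: neq_u1v1; apply.
exact: (geodetic_unique_pred geo ltpk ltpk u1_y' v1_y' u1a v1a).
Qed.

Lemma r_succ_notin_ball_u2 y : e r y -> y \notin ball e k.-1 u2.
Proof.
move=> r_y; apply/negP => y_in.
have [w [w_u1 w_r _ _]] := twin_pred_frontier arc_u_u2 arc_u_u1 (set21 u1 v1).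
have y_far : y \notin ball e 1 u2.
  rewrite ball1 negb_or (r_succ_not_u2_succ r_y) andbT.
  by apply: contraNneq no_arc_r_u2 => <-.
have [l l_y l_leaf] := geodetic_leaf geo out2 ltpk y_in y_far.
have l_r : l \in ball e k.-2 r.
  by apply: ball_mono (ball_cons r_y l_y); lia.
move/negP: (outN_not_subset_quad l); apply; apply/subsetP => t; rewrite in_outN => l_t.
have t_r : t \in ball e k.-1 r by rewrite -pred2K (ball_rcons l_r l_t).
have t_u1 : t \notin ball e k.-1 u1.
  apply: contra neq_ru1 => t_u1; apply/eqP.
  exact: (geodetic_branches_disjoint geo ltpk ltpk w_r w_u1 t_r t_u1).
have := vertex_cover t; rewrite (negbTE t_u1) (negbTE (l_leaf t l_t)) /=.
case/orP => // /eqP eq_tr; move: l_t; rewrite eq_tr.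
have lt_k2 : k.-2 < k by lia.
by rewrite (negbTE (geodetic_acyclic geo lt_k2 l_r)).
Qed.

Lemma outN_r_subset_quad : outN e r \subset quad.
Proof.
have [w [w_u1 w_r _ _]] := twin_pred_frontier arc_u_u2 arc_u_u1 (set21 u1 v1).
apply/subsetP => y; rewrite in_outN => r_y.
have y_u1 : y \notin ball e k.-1 u1.
  apply: contra neq_ru1 => y_u1; apply/eqP.
  have y_r : y \in ball e 1 r by rewrite (ball_cons r_y (ball_center e 0 y)).
  exact: (geodetic_branches_disjoint geo (ltnW lt2k) ltpk w_r w_u1 y_r y_u1).
have := vertex_cover y; rewrite (negbTE y_u1) (negbTE (r_succ_notin_ball_u2 r_y)) /=.
by case/orP => // /eqP eq_yr; move: r_y; rewrite eq_yr (negbTE (no_loop r)).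
Qed.

Lemma outlier_absurd : False.
Proof. exact: (negP (outN_not_subset_quad r)) outN_r_subset_quad. Qed.

End Outlier.

Lemma twins_absurd : False.
Proof.
have [r [neq_rv neq_rv1 outl]] := compl_ball_u.
exact: (outlier_absurd neq_rv neq_rv1 outl).
Qed.

End TwinOutNeighbourhoods.

Theorem lemma8 (k : nat) (V : finType) (e : rel V) (u v u1 u2 v1 : V) :
  4 <= k -> dig_2k3 e k -> u != v ->
  outN e u :&: outN e v = [set u2] ->
  outN e u = [set u1; u2] -> outN e v = [set v1; u2] ->
  outN e u1 != outN e v1.
Proof.
move=> k_ge4 [geo deg order] neq_uv common outNu outNv.
apply/eqP => twins.
exact: (twins_absurd (ltnW k_ge4) geo deg order neq_uv common outNu outNv twins).
Qed.
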